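(* Let $A, B, C, X$ be spaces and let $f \colon A \times B \times C \to X$ be a map. Suppose that $f$ factors, up to homotopy, through each of the two projections $A\times B\times C \to A \times C$ and $A \times B \times C \to B \times C$. Then $f$ factors, up to homotopy, through the projection $A \times B \times C \to C$. *)

From HB Require Import structures.
From mathcomp Require Import all_boot all_algebra.
From mathcomp Require Import all_classical all_reals topology.
From mathcomp Require Import Rstruct Rstruct_topology.
From Stdlib Require Import Reals.

Set Implicit Arguments.
Unset Strict Implicit.
Unset Printing Implicit Defensive.

Local Open Scope classical_set_scope.

Definition unit_interval : topologicalType :=
  subspace (`[0%R, 1%R]%classic : set Rdefinitions.R).

Definition homotopic (T X : topologicalType) (f g : T -> X) : Prop :=
  exists H : unit_interval * T -> X,
    continuous H /\
    (forall t, H ((0%R : Rdefinitions.R) : unit_interval, t) = f t) /\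
    (forall t, H ((1%R : Rdefinitions.R) : unit_interval, t) = g t).

Definition factors_up_to_homotopy (Y Z X : topologicalType)
    (f : Y -> X) (p : Y -> Z) : Prop :=
  exists g : Z -> X, continuous g /\ homotopic f (g \o p).

Definition proj_AC (A B C : topologicalType) (x : A * B * C) : A * C :=
  (x.1.1, x.2).
Definition proj_BC (A B C : topologicalType) (x : A * B * C) : B * C :=
  (x.1.2, x.2).
Definition proj_C (A B C : topologicalType) (x : A * B * C) : C := x.2.

(* Let f ~ g o p_AC and f ~ h o p_BC.  Suppose a : A and put
   i (a', b, c) := (a, b, c).  As p_BC o i = p_BC, we get
   f ~ h o p_BC = h o p_BC o i ~ f o i ~ g o p_AC o i, and
   (g o p_AC o i) (a', b, c) = g (a, c) depends on c alone.  The case b : B is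
   symmetric.  This only uses that homotopy is an equivalence relation
   compatible with precomposition; transitivity glues the two homotopies, run
   at double speed, along the closed sets t <= 1/2 and t >= 1/2. *)

From HB Require Import structures.
From mathcomp Require Import all_boot all_order all_algebra.
From mathcomp Require Import all_classical all_reals topology normedtype.
From mathcomp Require Import Rstruct Rstruct_topology lra.
Import Order.TTheory GRing.Theory Num.Theory.
Import numFieldNormedType.Exports.

Set Implicit Arguments.
Unset Strict Implicit.
Unset Printing Implicit Defensive.
Local Open Scope classical_set_scope.
Local Open Scope ring_scope.

Lemma continuous_subspace_map (T U : topologicalType) (A : set T) (B : set U)
    (g : T -> U) :
  continuous g -> {homo g : x / A x >-> B x} ->
  continuous (g : subspace A -> subspace B).
Proof.
move=> gc gAB; apply: (@subspaceT_continuous _ _ _ _ (mkfun_fun gAB)).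
exact: continuous_subspaceT.
Qed.

Lemma continuous_prod_map (S T U V : topologicalType)
    (f : S -> U) (g : T -> V) :
  continuous f -> continuous g -> continuous (fun p : S * T => (f p.1, g p.2)).
Proof.
move=> fc gc [s t]; apply: cvg_pair.
- by apply: (cvg_comp fst f _ (fc s)); exact: cvg_fst.
- by apply: (cvg_comp snd g _ (gc t)); exact: cvg_snd.
Qed.

Section unit_interval_reparametrizations.
Variable R : realFieldType.

Definition reverse_param (s : R) := 1 - s.
Definition first_half_param (s : R) := Num.min (2 * s) 1.
Definition second_half_param (s : R) := Num.max (2 * s - 1) 0.

Lemma continuous_reverse_param : continuous reverse_param.
Proof. by move=> s; apply: continuousB => //; exact: cst_continuous. Qed.

Lemma continuous_first_half_param : continuous first_half_param.
Proof.
apply: min_fun_continuous; last exact: cst_continuous.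
move=> s; apply: (continuousM (s := cst 2) (t := id)) => //.
exact: cst_continuous.
Qed.

Lemma continuous_second_half_param : continuous second_half_param.
Proof.
apply: max_fun_continuous; last exact: cst_continuous.
move=> s; apply: continuousB; last exact: cst_continuous.
by apply: (continuousM (s := cst 2) (t := id)) => //; exact: cst_continuous.
Qed.

Lemma reverse_param_itv : {homo reverse_param : s / s \in `[0, 1]}.
Proof.
move=> s; rewrite !in_itv /reverse_param /= => /andP[? ?].
by apply/andP; split; lra.
Qed.

Lemma first_half_param_itv : {homo first_half_param : s / s \in `[0, 1]}.
Proof.
move=> s; rewrite !in_itv /first_half_param /= => /andP[? ?].
apply/andP; split.
  by rewrite le_min; apply/andP; split; lra.
by rewrite ge_min lexx orbT.
Qed.

Lemma second_half_param_itv : {homo second_half_param : s / s \in `[0, 1]}.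
Proof.
move=> s; rewrite !in_itv /second_half_param /= => /andP[? ?].
apply/andP; split.
  by rewrite le_max lexx orbT.
by rewrite ge_max; apply/andP; split; lra.
Qed.

End unit_interval_reparametrizations.

Local Notation R := Rdefinitions.R.

Lemma continuous_reparam (T X : topologicalType) (H : unit_interval * T -> X)
    (phi : R -> R) :
  continuous H -> continuous phi -> {homo phi : s / s \in `[0, 1]} ->
  continuous (fun q : unit_interval * T => H (phi q.1 : unit_interval, q.2)).
Proof.
move=> Hc phic phiI q; apply: continuous_comp (Hc _).
apply: (@continuous_prod_map _ _ _ _ (phi : unit_interval -> unit_interval) id).
  exact: continuous_subspace_map.
by move=> t; exact: cvg_id.
Qed.

Lemma homotopic_sym (T X : topologicalType) (f g : T -> X) :
  homotopic f g -> homotopic g f.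
Proof.
move=> [H [Hc [H0 H1]]].
exists (fun q : unit_interval * T =>
  H (reverse_param q.1 : unit_interval, q.2)).
split; first exact: continuous_reparam (@continuous_reverse_param _)
                                       (@reverse_param_itv _).
by split=> t /=; rewrite /reverse_param ?subr0 ?subrr.
Qed.

Lemma continuous_glue (T U : topologicalType) (P : T -> bool) (B : set T)
    (f g : T -> U) :
  closed [set x | P x] -> closed B -> (forall x, ~~ P x -> B x) ->
  continuous f -> continuous g -> (forall x, P x -> B x -> f x = g x) ->
  continuous (fun x => if P x then f x else g x).
Proof.
move=> Pcl Bcl notPB fc gc fg; apply/continuous_subspace_setT.
have -> : [set: T] = [set x | P x] `|` B.
  apply/seteqP; split=> x // _.
  by case: (boolP (P x)) => Px; [left | right; exact: notPB].
apply: withinU_continuous => //.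
- apply: (subspace_eq_continuous (f := f)); last exact: continuous_subspaceT.
  by move=> x; rewrite inE /= /from_subspace => ->.
- apply: (subspace_eq_continuous (f := g)); last exact: continuous_subspaceT.
  by move=> x; rewrite inE /= /from_subspace; case: ifP => // Px Bx; rewrite fg.
Qed.

Lemma homotopic_trans (T X : topologicalType) (f g h : T -> X) :
  homotopic f g -> homotopic g h -> homotopic f h.
Proof.
move=> [H [Hc [H0 H1]]] [K [Kc [K0 K1]]].
exists (fun q : unit_interval * T => if (q.1 : R) <= 2^-1
  then H (first_half_param q.1 : unit_interval, q.2)
  else K (second_half_param q.1 : unit_interval, q.2)).
split.
  have closed_fst (P : set R) : closed P ->
      closed [set q : unit_interval * T | P q.1].
    move=> Pcl; apply: (@preimage_closed _ _ fst (P : set unit_interval)).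
      by move=> q _; exact: cvg_fst.
    exact: closed_subspaceW.
  apply: (continuous_glue
    (B := [set q : unit_interval * T | 2^-1 <= (q.1 : R)])).
  - by apply: (closed_fst [set s | s <= 2^-1]); exact: closed_le.
  - by apply: (closed_fst [set s | 2^-1 <= s]); exact: closed_ge.
  - by move=> q; rewrite -ltNge => /ltW.
  - exact: continuous_reparam (@continuous_first_half_param _)
                               (@first_half_param_itv _).
  - exact: continuous_reparam (@continuous_second_half_param _)
                               (@second_half_param_itv _).
  - move=> q /= le_half ge_half.
    have -> : (q.1 : R) = 2^-1 by apply/eqP; rewrite eq_le le_half ge_half.
    rewrite /first_half_param /second_half_param mulfV ?pnatr_eq0 //.
    rewrite subrr minxx maxxx.
    by rewrite H1 K0.
split=> t /=.
  by rewrite invr_ge0 ler0n /first_half_param mulr0 /Num.min ltr01 H0.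
rewrite (_ : (1 : R) <= 2^-1 = false); last first.
  by apply/negbTE; rewrite -ltNge invf_lt1 ?ltr1n.
have -> : second_half_param (1 : R) = 1.
  by rewrite /second_half_param mulr1 /Num.max; case: ltP; lra.
by rewrite K1.
Qed.

Lemma homotopic_comp (S T X : topologicalType) (p : S -> T) (f g : T -> X) :
  continuous p -> homotopic f g -> homotopic (f \o p) (g \o p).
Proof.
move=> pc [H [Hc [H0 H1]]].
exists (fun q : unit_interval * S => H (q.1, p q.2)).
split; last by split=> t /=; rewrite ?H0 ?H1.
move=> q; apply: continuous_comp (Hc _).
by apply: (continuous_prod_map (f := id)) => // s; exact: cvg_id.
Qed.

Lemma homotopic_comp_invariant (Y X : topologicalType) (i : Y -> Y)
    (f u : Y -> X) :
  continuous i -> homotopic f u -> u \o i = u -> homotopic f (f \o i).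
Proof.
move=> ic fu ui; apply: (homotopic_trans fu).
by rewrite -{1}ui; apply/homotopic_sym/homotopic_comp.
Qed.

Theorem lemma2p4 (A B C X : topologicalType) (f : A * B * C -> X) :
  continuous f ->
  (inhabited A \/ inhabited B) ->
  factors_up_to_homotopy f (@proj_AC A B C) ->
  factors_up_to_homotopy f (@proj_BC A B C) ->
  factors_up_to_homotopy f (@proj_C A B C).
Proof.
move=> _ [[a]|[b]] [g [gc fg]] [h [hc fh]].
- exists (curry g a); split; first exact: (continuous_curry gc).2.
  pose i (x : A * B * C) := (a, x.1.2, x.2).
  have ic : continuous i.
    apply: (@continuous_prod_map _ _ _ _ (fun ab : A * B => (a, ab.2)) id);
      last by move=> c; exact: cvg_id.
    exact: (@continuous_prod_map _ _ _ _ (fun=> a) id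
              (@cst_continuous _ _ a) (fun=> cvg_id)).
  apply: (homotopic_trans (homotopic_comp_invariant ic fh erefl)).
  exact: homotopic_comp ic fg.
- exists (curry h b); split; first exact: (continuous_curry hc).2.
  pose i (x : A * B * C) := (x.1.1, b, x.2).
  have ic : continuous i.
    apply: (@continuous_prod_map _ _ _ _ (fun ab : A * B => (ab.1, b)) id);
      last by move=> c; exact: cvg_id.
    exact: (@continuous_prod_map _ _ _ _ id (fun=> b)
              (fun=> cvg_id) (@cst_continuous _ _ b)).
  apply: (homotopic_trans (homotopic_comp_invariant ic fg erefl)).
  exact: homotopic_comp ic fh.
Qed.
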